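(* Let $\Gamma\in\mathcal S$ with embedding $\varphi$, and let $\Gamma_1,\Gamma_2\subset\Gamma$ be disjoint connected subtrees. Then for at least one $k\in\{1,2\}$ the vector $w_k=\sum_{v\in\Gamma_k}\varphi(v)$ is of the form $E_a-\sum_{j\in J}E_j$ with $a\notin J$.
   Context: A plumbing tree is a finite tree $\Gamma$ each of whose vertices $v$ carries an integer decoration $d(v)$. $\Gamma$ is minimal if no vertex has decoration $-1$. For $n\ge 1$ let $(\mathbb Z^n,Q_n)$ be the lattice with basis $E_1,\dots,E_n$ and $Q_n(E_i,E_j)=-\delta_{ij}$, and let $K=\sum_{i=1}^n E_i$. A plumbing tree $\Gamma$ on $n$ vertices is a symplectic plumbing tree if there is a map $\varphi$ (an embedding) from its vertex set to $\mathbb Z^n$ such that: for distinct vertices $v_1,v_2$, $Q_n(\varphi(v_1),\varphi(v_2))$ is $1$ if they are adjacent and $0$ otherwise; $Q_n(\varphi(v),\varphi(v))=d(v)$ for every $v$; and $Q_n(\varphi(v),K)+Q_n(\varphi(v),\varphi(v))=-2$ for every $v$. $\mathcal S$ is the set of minimal, connected symplectic plumbing trees. *)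

From mathcomp Require Import all_boot all_order all_algebra.
Set Implicit Arguments. Unset Strict Implicit. Unset Printing Implicit Defensive.
Import Order.TTheory GRing.Theory Num.Theory.
Local Open Scope ring_scope.

Definition lvec (n : nat) := {ffun 'I_n -> int}.

Definition Qn (n : nat) (x y : lvec n) : int := - \sum_(i < n) x i * y i.

Definition Ebas (n : nat) (i : 'I_n) : lvec n := [ffun j => ((j == i) : nat)%:Z].

Definition Kvec (n : nat) : lvec n := \sum_(i < n) Ebas i.

(* A finite simple graph on the finType V given by an adjacency relation e
   is a tree: nonempty, e symmetric and irreflexive, connected, and with
   exactly #|V| - 1 (undirected) edges. *)
Definition is_tree (V : finType) (e : rel V) : Prop :=
  [/\ (0 < #|V|)%N, symmetric e, irreflexive e,
      (forall x y : V, connect e x y) &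
      #|[set p : V * V | e p.1 p.2]| = (2 * (#|V| - 1))%N].

Definition minimal_dec (V : finType) (d : V -> int) : Prop :=
  forall v, d v != -1.

Definition symplectic_embedding (V : finType) (e : rel V) (d : V -> int)
    (n : nat) (phi : V -> lvec n) : Prop :=
  [/\ forall v1 v2, v1 != v2 -> Qn (phi v1) (phi v2) = (if e v1 v2 then 1 else 0),
      forall v, Qn (phi v) (phi v) = d v &
      forall v, Qn (phi v) (Kvec n) + Qn (phi v) (phi v) = -2].

Definition connected_subtree (V : finType) (e : rel V) (S : {set V}) : Prop :=
  S != set0 /\
  forall x y, x \in S -> y \in S ->
    connect [rel a b | [&& e a b, a \in S & b \in S]] x y.

(* Write [w_S] for the sum of [phi v] over [v \in S] and
   [A(w) = Q(w, w) + Q(w, K) = - sum_i w_i (w_i + 1)].  Every [phi v] has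
   [A = -2], and adjoining to [S] a vertex adjacent to it changes [A] by
   [-2 + 2 Q >= 0]; hence [A(w_S) >= -2] for connected [S], so [w_S] has at
   most one positive coordinate, and when it has one, [w_S] has the required
   shape [E_a - sum_J E_j].  If neither [w_1] nor [w_2] has a positive
   coordinate then [Q(w_1, w_2) <= 0], so no edge joins [G1] and [G2] and some
   component [C] of the rest of the tree is adjacent to both.  Pairing [w_C]
   with [w_1] and with [w_2] yields positive coordinates of [w_C] where [w_1],
   resp. [w_2], is negative; they coincide, forcing [Q(w_1, w_2) < 0], while
   [Q(w_1, w_2)] counts the edges between [G1] and [G2]. *)

From mathcomp Require Import all_boot all_order all_algebra.
From mathcomp Require Import zify ring.
Import Order.TTheory GRing.Theory Num.Theory.
Set Implicit Arguments. Unset Strict Implicit. Unset Printing Implicit Defensive.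
Local Open Scope ring_scope.

Section Lattice.
Variable n : nat.
Implicit Types x y z : lvec n.

Lemma QnC x y : Qn x y = Qn y x.
Proof. by rewrite /Qn; congr (- _); apply: eq_bigr => i _; rewrite mulrC. Qed.

Lemma QnDl x y z : Qn (x + y) z = Qn x z + Qn y z.
Proof.
by rewrite /Qn -opprD -big_split; congr (- _); apply: eq_bigr => i _; rewrite ffunE mulrDl.
Qed.

Lemma QnDr x y z : Qn z (x + y) = Qn z x + Qn z y.
Proof. by rewrite QnC QnDl !(QnC z). Qed.

Lemma Qn0l y : Qn 0 y = 0.
Proof. by rewrite /Qn big1 ?oppr0 // => i _; rewrite ffunE mul0r. Qed.

Lemma Qn_suml (I : finType) (P : pred I) (F : I -> lvec n) y :
  Qn (\sum_(i | P i) F i) y = \sum_(i | P i) Qn (F i) y.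
Proof. by elim/big_rec2: _ => [|i a b _ <-]; [exact: Qn0l | exact: QnDl]. Qed.

Lemma Qn_sumr (I : finType) (P : pred I) (F : I -> lvec n) y :
  Qn y (\sum_(i | P i) F i) = \sum_(i | P i) Qn y (F i).
Proof. by rewrite QnC Qn_suml; apply: eq_bigr => i _; rewrite QnC. Qed.

Lemma Qn_le0 x y : (forall i, 0 <= x i * y i) -> Qn x y <= 0.
Proof. by move=> xy; rewrite /Qn oppr_le0 sumr_ge0. Qed.

Lemma Qn_nonpos_lt0 x y i :
  (forall j, x j <= 0) -> (forall j, y j <= 0) -> x i < 0 -> y i < 0 -> Qn x y < 0.
Proof.
move=> xn yn xi yi; rewrite /Qn oppr_lt0 (bigD1 i) //=.
by rewrite ltr_pwDl ?mulr_lt0_gt0 ?nmulr_rgt0 // sumr_ge0 // => j _; rewrite mulr_le0.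
Qed.

Lemma Qn_gt0_coord x y :
  (forall j, y j <= 0) -> 0 < Qn x y -> exists i, 0 < x i /\ y i < 0.
Proof.
move=> yn Qxy; case: (pickP (fun i => (0 < x i) && (y i < 0))) => [i /andP [] | none].
  by exists i.
suff : Qn x y <= 0 by rewrite leNgt Qxy.
apply: Qn_le0 => i; have := none i; have := yn i.
by case: (ltrP 0 (x i)) => /= xi yi; nia.
Qed.

Lemma KvecE i : Kvec n i = 1.
Proof.
rewrite /Kvec sum_ffunE (bigD1 i) //= ffunE eqxx big1 ?addr0 // => j ji.
by rewrite ffunE eq_sym (negbTE ji).
Qed.

Lemma sum_EbasE (J : {set 'I_n}) i : (\sum_(j in J) Ebas j) i = (i \in J)%:R.
Proof.
rewrite sum_ffunE; case: (boolP (i \in J)) => iJ.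
  rewrite (bigD1 i) //= ffunE eqxx big1 ?addr0 // => j /andP [_ ji].
  by rewrite ffunE eq_sym (negbTE ji).
by rewrite big1 // => j jJ; rewrite ffunE; case: eqP => // ij; rewrite ij jJ in iJ.
Qed.

Definition adjunction x := Qn x x + Qn x (Kvec n).

Lemma adjunctionE x : adjunction x = - \sum_(i < n) x i * (x i + 1).
Proof.
rewrite /adjunction /Qn -opprD -big_split; congr (- _); apply: eq_bigr => i _.
by rewrite KvecE mulrDr mulr1.
Qed.

Lemma adjunctionD x y : adjunction (x + y) = adjunction x + adjunction y + 2 * Qn x y.
Proof. by rewrite /adjunction !QnDl !QnDr (QnC y x); ring. Qed.

(* Each term [x i * (x i + 1)] is nonnegative, and at least [2] at a positive
   coordinate. *)
Lemma adjunction_ge_pos_coord x a : -2 <= adjunction x -> 0 < x a ->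
  x a = 1 /\ forall j, j != a -> x j = 0 \/ x j = -1.
Proof.
have term_ge0 (z : int) : 0 <= z * (z + 1) by case: (lerP 0 z) => ?; nia.
rewrite adjunctionE lerNl opprK (bigD1 a) //= => sum_le xa.
set rest := \sum_(j | j != a) _ in sum_le.
have rest_ge0 : 0 <= rest by apply: sumr_ge0 => j _; apply: term_ge0.
have xa1 : x a = 1 by move: (x a) xa sum_le rest_ge0 => z; nia.
have rest0 : rest = 0 by rewrite xa1 in sum_le; lia.
split=> // j ja.
have := psumr_eq0P (fun i _ => term_ge0 (x i)) rest0 ja.
by move/eqP; rewrite mulf_eq0 addr_eq0 => /orP [] /eqP; [left | right].
Qed.

Lemma adjunction_ge_pos_uniq x i j :
  -2 <= adjunction x -> 0 < x i -> 0 < x j -> i = j.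
Proof.
move=> hx xi xj; have [_ others] := adjunction_ge_pos_coord hx xi.
apply/eqP; apply: contraT; rewrite eq_sym => /others.
by case=> xj0; rewrite xj0 in xj.
Qed.

Lemma adjunction_ge_shape x a : -2 <= adjunction x -> 0 < x a ->
  exists (a : 'I_n) (J : {set 'I_n}), a \notin J /\ x = Ebas a - \sum_(j in J) Ebas j.
Proof.
move=> hx xa; have [xa1 others] := adjunction_ge_pos_coord hx xa.
exists a, [set j | x j == -1]; split; first by rewrite inE xa1.
apply/ffunP => i; rewrite !ffunE sum_EbasE inE.
case: (eqVneq i a) => [-> | ia]; first by rewrite xa1.
by case: (others i ia) => ->.
Qed.

End Lattice.

Lemma connect_exit (T : finType) (r : rel T) (A : {set T}) x y :
  connect r x y -> x \in A -> y \notin A ->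
  exists a b, [/\ a \in A, b \notin A & r a b].
Proof.
move=> /connectP [p]; elim: p x => [|z p IHp] x /=; first by move=> _ -> ->.
move=> /andP [xz zp] ylast xA yA.
case: (boolP (z \in A)) => zA; first exact: IHp zp ylast zA yA.
by exists x, z.
Qed.

Section Plumbing.
Variables (V : finType) (e : rel V) (n : nat) (phi : V -> lvec n).
Hypothesis e_sym : symmetric e.
Hypothesis phi_adj :
  forall v1 v2, v1 != v2 -> Qn (phi v1) (phi v2) = (if e v1 v2 then 1 else 0).
Hypothesis phi_K : forall v, Qn (phi v) (Kvec n) + Qn (phi v) (phi v) = -2.

Definition wS (A : {set V}) : lvec n := \sum_(v in A) phi v.

Definition induced (R : {set V}) : rel V := [rel a b | [&& e a b, a \in R & b \in R]].

Definition linked (A B : {set V}) := [exists a in A, exists b in B, e a b].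

Definition component (R : {set V}) x : {set V} := [set y | connect (induced R) x y].

Lemma adjunction_phi v : adjunction (phi v) = -2.
Proof. by rewrite /adjunction addrC phi_K. Qed.

Lemma Qn_wS_disjoint (A B : {set V}) : [disjoint A & B] ->
  Qn (wS A) (wS B) = \sum_(u in A) \sum_(v in B) (if e u v then 1 else 0).
Proof.
move=> dAB; rewrite /wS Qn_suml; apply: eq_bigr => u uA.
rewrite Qn_sumr; apply: eq_bigr => v vB; apply: phi_adj.
by apply: contraTneq vB => <-; rewrite (disjointFr dAB uA).
Qed.

Lemma Qn_wS_ge0 (A B : {set V}) : [disjoint A & B] -> 0 <= Qn (wS A) (wS B).
Proof.
move=> dAB; rewrite Qn_wS_disjoint // sumr_ge0 // => u _.
by rewrite sumr_ge0 // => v _; case: e.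
Qed.

Lemma linked_Qn_wS_gt0 (A B : {set V}) :
  [disjoint A & B] -> linked A B -> 0 < Qn (wS A) (wS B).
Proof.
move=> dAB /existsP [u /andP [uA /existsP [v /andP [vB euv]]]].
rewrite Qn_wS_disjoint // (bigD1 u) //= (bigD1 v) //= euv -addrA ltr_pwDl //.
by rewrite addr_ge0 // !sumr_ge0 // => *; [case: e | rewrite sumr_ge0 // => *; case: e].
Qed.

Lemma linkedSl (A A' B : {set V}) : A \subset A' -> linked A B -> linked A' B.
Proof.
move=> AA' /existsP [a /andP [aA lab]].
by apply/existsP; exists a; rewrite (subsetP AA' a aA).
Qed.

Lemma linked1 (A B : {set V}) a b : a \in A -> b \in B -> e a b -> linked A B.
Proof.
by move=> aA bB eab; apply/existsP; exists a; rewrite aA; apply/existsP; exists b; rewrite bB.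
Qed.

Lemma adjunction_wS_ge (R S : {set V}) r : r \in S ->
  (forall a b, induced R a b -> a \in S -> b \in S) ->
  (forall y, y \in S -> connect (induced R) r y) ->
  -2 <= adjunction (wS S).
Proof.
move=> rS S_closed S_conn.
pose good (T : {set V}) := [&& r \in T, T \subset S & -2 <= adjunction (wS T)].
have good_r : good [set r].
  by rewrite /good set11 sub1set rS /wS big_set1 adjunction_phi /=.
case: (@arg_maxnP _ _ good (fun T => #|T|) good_r) => T /and3P [rT TS hT] T_max.
suff -> : S = T by [].
apply/eqP; rewrite eq_sym eqEsubset TS /=; apply/subsetP => y yS.
apply/negPn/negP => yT.
have [a [b [aT bT iab]]] := connect_exit (S_conn y yS) rT yT.
have bS : b \in S by apply: S_closed iab (subsetP TS a aT).
have good_bT : good (b |: T).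
  rewrite /good in_setU1 rT orbT subUset sub1set bS TS /=.
  have linked_bT : linked [set b] T.
    by apply: linked1 (set11 b) aT _; rewrite e_sym; case/and3P: iab.
  have := @linked_Qn_wS_gt0 [set b] T _ linked_bT.
  have -> : wS (b |: T) = phi b + wS T by rewrite /wS big_setU1.
  rewrite disjoints1 bT adjunctionD adjunction_phi /wS big_set1 -/(wS T) => /(_ isT); lia.
by have := T_max _ good_bT; rewrite cardsU1 bT /= ltnn.
Qed.

Lemma adjunction_connected_subtree (S : {set V}) :
  connected_subtree e S -> -2 <= adjunction (wS S).
Proof.
case=> /set0Pn [r rS] S_conn.
by apply: (@adjunction_wS_ge S S r) => // [a b /and3P [] | y yS]; last exact: S_conn.
Qed.

Lemma mem_component (R : {set V}) x : x \in component R x.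
Proof. by rewrite inE connect0. Qed.

Lemma component_sub (R : {set V}) x : x \in R -> component R x \subset R.
Proof.
move=> xR; apply/subsetP => y; rewrite inE => /connectP [p].
by elim: p x xR => [|z p IHp] x xR /=; [move=> _ -> | case/andP=> /and3P [_ _ zR] /IHp; apply].
Qed.

Lemma adjunction_component (R : {set V}) x : -2 <= adjunction (wS (component R x)).
Proof.
apply: (@adjunction_wS_ge R _ x (mem_component R x)) => [a b iab | y]; last by rewrite inE.
by rewrite !inE => /connect_trans; apply; apply: connect1.
Qed.

Lemma component_disjoint (A B : {set V}) x :
  x \in ~: A -> B \subset A -> [disjoint component (~: A) x & B].
Proof.
move=> xA BA; rewrite disjoints_subset; apply: subset_trans (component_sub xA) _.
by rewrite setCS.
Qed.

(* If no edge joins [G1] and [G2], the first edge leaving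
   [G1 :|: {components of the rest linked to G1}] on a path from [G1] to [G2]
   exhibits a component linked to both. *)
Lemma exists_component_linked2 (G1 G2 : {set V}) g1 g2 :
  (forall x y, connect e x y) -> g1 \in G1 -> g2 \in G2 ->
  [disjoint G1 & G2] -> ~~ linked G1 G2 ->
  let R := ~: (G1 :|: G2) in
  exists2 x, x \in R & linked (component R x) G1 && linked (component R x) G2.
Proof.
move=> conn g1G1 g2G2 dG12 not_linked R.
pose X := G1 :|: [set y in R | linked (component R y) G1].
have g2X : g2 \notin X by rewrite !inE (disjointFl dG12 g2G2) g2G2.
have g1X : g1 \in X by rewrite inE g1G1.
have [x [y [xX yX exy]]] := connect_exit (conn g1 g2) g1X g2X.
move: yX; rewrite in_setU in_set negb_or negb_and => /andP [yG1 yR_or].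
have [yG2 | yG2] := boolP (y \in G2).
  move: xX; rewrite in_setU in_set => /orP [xG1 | /andP [xR lx1]].
    by rewrite (linked1 xG1 yG2 exy) in not_linked.
  by exists x; rewrite // lx1 (linked1 (mem_component R x) yG2 exy).
have yR : y \in R by rewrite !inE negb_or yG1 yG2.
exfalso; move: yR_or; rewrite yR /= => /negP; apply.
move: xX; rewrite in_setU in_set => /orP [xG1 | /andP [xR lx1]].
  by rewrite (linked1 (mem_component R y) xG1) // e_sym.
apply: linkedSl lx1; apply/subsetP => z; rewrite !inE; apply: connect_trans.
by apply: connect1; rewrite /induced /= e_sym exy yR xR.
Qed.

End Plumbing.

Theorem corollary3p5 (V : finType) (e : rel V) (d : V -> int) (n : nat)
    (phi : V -> lvec n) (G1 G2 : {set V}) :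
  (1 <= n)%N -> #|V| = n ->
  is_tree e -> minimal_dec d ->
  symplectic_embedding e d phi ->
  connected_subtree e G1 -> connected_subtree e G2 ->
  [disjoint G1 & G2] ->
  exists k : bool,
    exists (a : 'I_n) (J : {set 'I_n}),
      a \notin J /\
      \sum_(v in (if k then G1 else G2)) phi v = Ebas a - \sum_(j in J) Ebas j.
Proof.
move=> _ _ [_ e_sym _ conn _] _ [phi_adj _ phi_K] G1_conn G2_conn dG12.
have adj_G1 := adjunction_connected_subtree e_sym phi_adj phi_K G1_conn.
have adj_G2 := adjunction_connected_subtree e_sym phi_adj phi_K G2_conn.
case: (pickP (fun a => 0 < wS phi G1 a)) => [a w1a | w1_le0].
  by exists true; exact: adjunction_ge_shape adj_G1 w1a.
case: (pickP (fun a => 0 < wS phi G2 a)) => [a w2a | w2_le0].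
  by exists false; exact: adjunction_ge_shape adj_G2 w2a.
have w1n i : wS phi G1 i <= 0 by rewrite leNgt w1_le0.
have w2n i : wS phi G2 i <= 0 by rewrite leNgt w2_le0.
have not_linked : ~~ linked e G1 G2.
  apply/negP => /(linked_Qn_wS_gt0 phi_adj dG12).
  by rewrite ltNge Qn_le0 // => i; rewrite mulr_le0.
have [[/set0Pn [g1 g1G1] _] [/set0Pn [g2 g2G2] _]] := (G1_conn, G2_conn).
have [x xR /andP [linked_G1 linked_G2]] :=
  exists_component_linked2 e_sym conn g1G1 g2G2 dG12 not_linked.
have [i [Ci w1i]] := Qn_gt0_coord w1n
  (linked_Qn_wS_gt0 phi_adj (component_disjoint e xR (subsetUl _ _)) linked_G1).
have [j [Cj w2j]] := Qn_gt0_coord w2n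
  (linked_Qn_wS_gt0 phi_adj (component_disjoint e xR (subsetUr _ _)) linked_G2).
have ij := adjunction_ge_pos_uniq (adjunction_component e_sym phi_adj phi_K _ x) Ci Cj.
rewrite -ij in w2j.
have := Qn_nonpos_lt0 w1n w2n w1i w2j.
by rewrite ltNge (Qn_wS_ge0 phi_adj).
Qed.
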